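(* Let $o_{n,i}$ be the probability that a random Bernoulli text of length $n$ contains exactly $i$ clumps of $w$. Then $$\sum_{n,i\ge0}o_{n,i}\,u^i z^n=N(z)+\frac{u\,R(z)\,U(z)}{1-u\,M(z)+(u-1)K(z)}.$$
   Context: Let $\mathcal{A}$ be a finite alphabet with $|\mathcal{A}|\ge2$ and $w\in\mathcal{A}^*$ a fixed word of length $\ell=|w|\ge 2$. Bernoulli model: each letter $a$ has probability $p_a>0$, $\sum_a p_a=1$, $\mathbf{P}(a_1\cdots a_n)=\prod_i p_{a_i}$; for a language $L$, $L(z)=\sum_{x\in L}\mathbf{P}(x)z^{|x|}$; $\pi_w=\mathbf{P}(w)$. Occurrences of $w$ are position intervals where $w$ appears; two occurrences overlap if their intervals share a position; clumps are equivalence classes of occurrences under the transitive closure of overlapping. Autocorrelation set $\mathcal{C}=\{\epsilon\}\cup\{e\in\mathcal{A}^+: |e|<\ell,\ \exists e'\in\mathcal{A}^+,\ we=e'w\}$, $\mathcal{C}_\circ=\mathcal{C}\setminus\{\epsilon\}$, $\mathcal{K}=\mathcal{C}_\circ\setminus\mathcal{C}_\circ\mathcal{A}^+$ with generating function $K(z)$. Languages: $\mathcal{R}=\{r\in\mathcal{A}^*w: \text{no } r=xwy,\ |y|>0\}$; $\mathcal{M}=\{m\in\mathcal{A}^+: wm\in\mathcal{A}^*w,\ \text{no } wm=xwy,\ |x|>0,|y|>0\}$; $\mathcal{U}=\{u\in\mathcal{A}^*: \text{no } wu=xwy,\ |x|>0\}$; $\mathcal{N}=\{n: w\text{ not a factor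 of }n\}$, with generating functions $R(z),M(z),U(z),N(z)$; explicitly, with $C(z)$ the generating function of $\mathcal{C}$ and $D(z)=\pi_w z^{\ell}+(1-z)C(z)$: $R=\pi_w z^\ell/D$, $M=1+(z-1)/D$, $U=1/D$, $N=C/D$. *)

From HB Require Import structures.
From mathcomp Require Import all_boot all_order all_algebra.
Set Implicit Arguments. Unset Strict Implicit. Unset Printing Implicit Defensive.
Import Order.TTheory GRing.Theory Num.Theory.

Section Words.
Variable A : finType.
Variable w : seq A.

(* w occurs in s at (0-based) position i, i.e. on the interval [i, i+|w|-1] *)
Definition occ_at (s : seq A) (i : nat) : bool := take (size w) (drop i s) == w.

Definition occs (s : seq A) : {set 'I_(size s)} :=
  [set i : 'I_(size s) | occ_at s i].

Arguments occs s : clear implicits.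

(* two occurrences overlap iff their position intervals share a position *)
Definition ovl (s : seq A) : rel 'I_(size s) :=
  fun i j => [&& occ_at s i, occ_at s j, (i < j + size w)%N & (j < i + size w)%N].

Arguments ovl s : clear implicits.

Definition nclumps (s : seq A) : nat :=
  #|equivalence_partition (connect (ovl s)) (occs s)|.

(* R = { r in A^* w : no r = x w y with |y| > 0 } *)
Definition langR (r : seq A) : bool :=
  suffix w r &&
  ~~ has (fun i => occ_at r i && (i + size w < size r)%N) (iota 0 (size r)).

(* M = { m in A^+ : w m in A^* w, no w m = x w y with |x|>0, |y|>0 } *)
Definition langM (m : seq A) : bool :=
  [&& (0 < size m)%N, suffix w (w ++ m) &
   ~~ has (fun i => occ_at (w ++ m) i && (0 < i)%N && (i + size w < size (w ++ m))%N)
          (iota 0 (size (w ++ m)))].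

(* U = { u in A^* : no w u = x w y with |x| > 0 } *)
Definition langU (u : seq A) : bool :=
  ~~ has (fun i => occ_at (w ++ u) i && (0 < i)%N) (iota 0 (size (w ++ u))).

Definition langN (n : seq A) : bool := ~~ infix w n.

(* C_o = { e in A^+ : |e| < |w|, exists e' in A^+, w e = e' w } *)
Definition langCo (e : seq A) : bool :=
  [&& (0 < size e)%N, (size e < size w)%N &
   [exists k : 'I_(size w), [exists e' : k.-tuple A,
      (0 < k)%N && (w ++ e == tval e' ++ w)]]].

(* K = C_o \ C_o A^+ *)
Definition langK (e : seq A) : bool :=
  langCo e &&
  ~~ has (fun k => langCo (take k e) && (0 < size (drop k e))%N) (iota 0 (size e).+1).

End Words.

Section Series.
Local Open Scope ring_scope.
Variable R : numFieldType.

Definition Pw (A : finType) (p : A -> R) (s : seq A) : R := \prod_(a <- s) p a.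

(* coefficient of z^n in L(z) = sum_{x in L} P(x) z^|x| *)
Definition gfc (A : finType) (p : A -> R) (L : pred (seq A)) (n : nat) : R :=
  \sum_(x : n.-tuple A | L (tval x)) Pw p x.

Definition clump_prob (A : finType) (p : A -> R) (w : seq A) (n i : nat) : R :=
  \sum_(x : n.-tuple A | nclumps w x == i) Pw p x.

(* Formal power series in two variables u, z: f i n = coefficient of u^i z^n *)
Definition fps2 := nat -> nat -> R.

Definition fps2_const (c : R) : fps2 := fun i n => if (i == 0)%N && (n == 0)%N then c else 0.
Definition fps2_u : fps2 := fun i n => if (i == 1)%N && (n == 0)%N then 1 else 0.
Definition fps2_z (f : nat -> R) : fps2 := fun i n => if (i == 0)%N then f n else 0.
Definition fps2_add (f g : fps2) : fps2 := fun i n => f i n + g i n.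
Definition fps2_opp (f : fps2) : fps2 := fun i n => - f i n.
Definition fps2_mul (f g : fps2) : fps2 := fun i n =>
  \sum_(j < i.+1) \sum_(k < n.+1) f j k * g (i - j)%N (n - k)%N.
Definition fps2_pow (f : fps2) (k : nat) : fps2 := iter k (fps2_mul f) (fps2_const 1).
(* inverse of a series f with constant term 1: 1/f = sum_k (1 - f)^k, where
   only k <= i + n contributes to the coefficient of u^i z^n *)
Definition fps2_inv (f : fps2) : fps2 := fun i n =>
  \sum_(k < (i + n).+1) fps2_pow (fps2_add (fps2_const 1) (fps2_opp f)) k i n.
End Series.

(* We prove
       O = N + u R U / (1 - u M + (u - 1) K),
   following the decomposition of texts into the languages N, R, M, U, K.
   1. A clump is identified with its leftmost occurrence (a clump start), so
      the number of clumps is a count over the occurrence positions.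
   2. A text either avoids w, or factors uniquely as h v with h ending with w
      and v in U (cut after the last occurrence); v adds no clump.  A text
      ending with w is either in R (one clump) or factors uniquely as h m with
      h ending with w and m in M (cut after the last but one occurrence);
      m adds a clump iff |m| >= |w|, and the words of M shorter than w form K.
   3. Summing over a unique factorization is a convolution (tsum_factor).
   4. With H the series of texts ending with w, this yields O = N + H U and
      H = u R + H (1 - D); the latter equation is solved by the geometric
      series fps2_inv D (fix_solution).  The ring laws of bivariate series
      are obtained by truncation to polynomials on finite boxes. *)

From Stdlib Require Import FunctionalExtensionality.
From mathcomp Require Import all_boot all_algebra zify.
Import GRing.Theory.
Set Implicit Arguments. Unset Strict Implicit. Unset Printing Implicit Defensive.

(* The same [size s] may appear at
   convertible but syntactically different element types (Finite.sort A,
   Equality.sort A); all of them are identified before calling [lia]. *)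
Ltac size_lia :=
  repeat match goal with H : is_true _ |- _ => revert H | H : @eq nat _ _ |- _ => revert H end;
  repeat match goal with
         | n := @size _ ?x |- context [@size ?T ?x] => change (@size T x) with n
         | |- context [@size ?T ?x] =>
             let n := fresh "n" in pose n := @size T x; change (@size T x) with n
         end;
  intros; lia.

Section Occurrences.
Variables (A : finType) (w : seq A).
Hypothesis w_nonempty : (0 < size w)%N.
Local Notation l := (size w).
Local Notation occ := (occ_at w).

Lemma occ_end s i : occ s i -> (i + l <= size s)%N.
Proof.
move/eqP/(congr1 size); rewrite size_take size_drop.
by case: ltnP; size_lia.
Qed.

Lemma occ_beyond s i : (size s < i + l)%N -> occ s i = false.
Proof. by move=> lt; apply: contraTF lt => /occ_end; rewrite -leqNgt. Qed.

Lemma occ_dropE s i : occ s i -> drop i s = w ++ drop (i + l) s.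
Proof. by move/eqP=> e; rewrite -{1}(cat_take_drop l (drop i s)) e drop_drop addnC. Qed.

Lemma occ_take_suffix s i : occ s i -> suffix w (take (i + l) s).
Proof. by move/eqP=> e; rewrite takeD e suffix_suffix. Qed.

Lemma occ_drop s i j : occ (drop i s) j = occ s (i + j).
Proof. by rewrite /occ_at drop_drop addnC. Qed.

Lemma occ_suffix s : suffix w s -> occ s (size s - l).
Proof. by rewrite suffixE => /eqP e; rewrite /occ_at e take_oversize. Qed.

Lemma occ_catl s t i : (i + l <= size s)%N -> occ (s ++ t) i = occ s i.
Proof.
move=> le_il; rewrite /occ_at drop_cat ifT; last by size_lia.
by rewrite takel_cat // size_drop; size_lia.
Qed.

Lemma occ_catr s t i : occ (s ++ t) (size s + i) = occ t i.
Proof. by rewrite /occ_at drop_cat ltnNge leq_addr /= addKn. Qed.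

Lemma infix_occ s : infix w s = has (occ s) (iota 0 (size s)).
Proof.
apply/idP/hasP => [/infixP [a [b ->]]|[i _ /occ_dropE e]].
  exists (size a); first by rewrite mem_iota !size_cat; size_lia.
  by rewrite -[size a]addn0 occ_catr /occ_at drop0 take_size_cat.
by rewrite -(cat_take_drop i s) e; apply/infixP; exists (take i s), (drop (i + l) s).
Qed.

(* An occurrence starts a clump when no earlier occurrence overlaps it;
   the clump starts are the leftmost occurrences of the clumps. *)
Definition clump_start s i : bool :=
  occ s i && ~~ has (fun j => occ s j && (i < j + l)%N) (iota 0 i).

Definition nstarts s : nat := count (clump_start s) (iota 0 (size s)).

Local Notation overlap s := (@ovl A w s).

Lemma overlap_sym s : symmetric (overlap s).
Proof. by move=> i j; rewrite /ovl; case: (occ s i); case: (occ s j); rewrite //= andbC. Qed.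

Lemma clump_start_min s (i j : 'I_(size s)) :
  clump_start s i -> connect (overlap s) i j -> (i <= j)%N.
Proof.
case/andP=> _ /hasPn no_left /connectP [q path_q ->].
suff: forall x : 'I_(size s), (i <= x)%N -> path (overlap s) x q -> (i <= last x q)%N by apply.
elim: q {path_q} => [|y q IH] x //= le_ix /andP [/and4P [_ occ_y lt_xy _] path_q].
apply: IH path_q; rewrite leqNgt; apply/negP=> lt_yi.
have := no_left (nat_of_ord y); rewrite mem_iota lt_yi occ_y /=.
by move/(_ isT); rewrite (leq_trans _ lt_xy).
Qed.

Lemma occ_connect_start s (x : 'I_(size s)) :
  occ s x -> exists2 y : 'I_(size s), clump_start s y & connect (overlap s) x y.
Proof.
have [n] := ubnP (nat_of_ord x); elim: n x => // n IH x lt_xn occ_x.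
case start_x: (clump_start s x); first by exists x; rewrite ?connect0.
move: start_x; rewrite /clump_start occ_x /= => /negbFE /hasP [j].
rewrite mem_iota /= => lt_jx /andP [occ_j lt_xj].
have lt_js : (j < size s)%N := ltn_trans lt_jx (ltn_ord x).
have [y start_y conn_jy] := IH (Ordinal lt_js) (leq_trans lt_jx lt_xn) occ_j.
exists y => //; apply: connect_trans conn_jy; apply: connect1.
by rewrite /ovl /= occ_x occ_j lt_xj /= (ltn_addr _ lt_jx).
Qed.

(* Clumps are in bijection with their leftmost occurrences. *)
Lemma nclumps_starts s : nclumps w s = nstarts s.
Proof.
rewrite /nclumps /equivalence_partition; set cls := fun x => _.
have conn_sym := sym_connect_sym (@overlap_sym s).
have -> : [set cls x | x in occs w s] = [set cls y | y in [set y : 'I_(size s) | clump_start s y]].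
  apply/setP => X; apply/imsetP/imsetP => [[x occ_x ->]|[y start_y ->]].
    rewrite inE in occ_x; have [y start_y conn_xy] := occ_connect_start occ_x.
    exists y; first by rewrite inE.
    by apply/setP => z; rewrite !inE (same_connect conn_sym conn_xy).
  by rewrite inE in start_y; exists y; rewrite ?inE ?(andP start_y).1.
rewrite card_in_imset.
  rewrite cardsE -sum1_card /nstarts -sum1_count.
  rewrite [RHS](_ : _ = \sum_(0 <= j < size s | clump_start s j) 1)%N.
    by rewrite big_mkord; apply: eq_bigl.
  by rewrite /index_iota subn0.
move=> y1 y2; rewrite !inE => start1 start2 e.
have in_cls (y : 'I_(size s)) : clump_start s y -> y \in cls y.
  by move=> start_y; rewrite inE connect0 andbT inE (andP start_y).1.
have conn12 : connect (overlap s) y1 y2 by have := in_cls _ start2; rewrite -e inE => /andP [].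
have conn21 : connect (overlap s) y2 y1 by have := in_cls _ start1; rewrite e inE => /andP [].
by apply/val_inj/eqP; rewrite eqn_leq (clump_start_min start1 conn12) (clump_start_min start2 conn21).
Qed.

Lemma clump_start_ext s t i :
  (forall j, (j <= i)%N -> occ s j = occ t j) -> clump_start s i = clump_start t i.
Proof.
move=> eq_occ; rewrite /clump_start eq_occ //; congr (_ && ~~ _).
by apply: eq_in_has => j; rewrite mem_iota => /andP [_ lt_ji] /=; rewrite eq_occ // ltnW.
Qed.

Lemma clump_start_beyond s i : (size s < i + l)%N -> clump_start s i = false.
Proof. by move=> lt; rewrite /clump_start occ_beyond. Qed.

Lemma count_starts_beyond s a b :
  (size s < a + l)%N -> count (clump_start s) (iota a b) = 0%N.
Proof.
move=> lt_sa; apply/eqP; rewrite -leqn0 leqNgt -has_count; apply/hasPn => i.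
by rewrite mem_iota => /andP [le_ai _]; rewrite clump_start_beyond //; size_lia.
Qed.

Lemma nstarts_upto s n : (size s < n + l)%N -> nstarts s = count (clump_start s) (iota 0 n).
Proof.
rewrite /nstarts => lt_sn; case: (leqP n (size s)) => [le_ns|lt_ns].
  rewrite -(subnKC le_ns) iotaD count_cat.
  by rewrite [count _ (iota (0 + _) _)]count_starts_beyond ?addn0 //; size_lia.
rewrite -(subnKC (ltnW lt_ns)) iotaD count_cat.
by rewrite [count _ (iota (0 + _) _)]count_starts_beyond ?addn0 //; size_lia.
Qed.

Lemma nstarts_eq0 s : (nstarts s == 0)%N = ~~ infix w s.
Proof.
rewrite infix_occ /nstarts eqn0Ngt -has_count; congr (~~ _).
apply/hasP/hasP => [[i in_i /andP [occ_i _]]|[i]]; first by exists i.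
rewrite mem_iota /= => lt_is occ_i.
have [y start_y _] := @occ_connect_start s (Ordinal lt_is) occ_i.
by exists (nat_of_ord y); rewrite // mem_iota /=.
Qed.

Lemma occ_past_suffix h0 v i :
  (size h0 < i)%N -> occ (h0 ++ w ++ v) i = occ (w ++ v) (i - size h0).
Proof. by move=> lt_i; rewrite -{1}(subnKC (ltnW lt_i)) occ_catr. Qed.

Lemma occ_catU h v : suffix w h -> langU w v -> forall i, occ (h ++ v) i = occ h i.
Proof.
case/suffixP=> h0 -> U_v i; case: (leqP i (size h0)) => [le_i|lt_i].
  by rewrite occ_catl // size_cat; size_lia.
rewrite [RHS]occ_beyond ?size_cat; last by size_lia.
rewrite -catA occ_past_suffix //; apply: contraNF U_v => occ_t.
apply/hasP; exists (i - size h0); last by rewrite occ_t; size_lia.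
by rewrite mem_iota; have := occ_end occ_t; size_lia.
Qed.

Lemma occ_catM h m : suffix w h -> langM w m ->
  forall i, (i + l < size (h ++ m))%N -> occ (h ++ m) i = occ h i.
Proof.
case/suffixP=> h0 -> /and3P [_ _ M_m] i lt_il; case: (leqP i (size h0)) => [le_i|lt_i].
  by rewrite occ_catl // size_cat; size_lia.
rewrite [RHS]occ_beyond ?size_cat; last by size_lia.
rewrite -catA occ_past_suffix //; apply: contraNF M_m => occ_t.
apply/hasP; exists (i - size h0); last by rewrite occ_t; move: lt_il; rewrite !size_cat; size_lia.
by rewrite mem_iota; have := occ_end occ_t; size_lia.
Qed.

Lemma suffix_catM h m : suffix w h -> langM w m -> suffix w (h ++ m).
Proof. by case/suffixP=> h0 -> /and3P [_ suff_m _]; rewrite -catA suffix_catr. Qed.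

Lemma nstarts_catU h v : suffix w h -> langU w v -> nstarts (h ++ v) = nstarts h.
Proof.
move=> suff_h U_v; rewrite [RHS](@nstarts_upto _ (size (h ++ v))).
  by apply: eq_count => i; apply: clump_start_ext => j _; apply: occ_catU.
by rewrite size_cat; size_lia.
Qed.

(* Appending a word of M adds a clump exactly when the new final occurrence
   does not overlap the previous one, i.e. when |m| >= |w|. *)
Lemma nstarts_catM h m : suffix w h -> langM w m ->
  nstarts (h ++ m) = (nstarts h + (l <= size m))%N.
Proof.
move=> suff_h M_m; have le_lh := size_suffix suff_h.
have m_nonempty : (0 < size m)%N by case/and3P: M_m.
set L := (size (h ++ m) - l)%N.
have size_hm : size (h ++ m) = (L + l)%N by rewrite /L size_cat; size_lia.
rewrite (@nstarts_upto _ L.+1) ?size_hm // (@nstarts_upto h L); last first.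
  by move: size_hm; rewrite size_cat; size_lia.
rewrite -addn1 iotaD count_cat /= addn0; congr (_ + _)%N.
  apply: eq_in_count => i; rewrite mem_iota /= => lt_iL.
  by apply: clump_start_ext => j le_ji; apply: occ_catM; rewrite // size_hm; size_lia.
have occ_L : occ (h ++ m) L by apply: occ_suffix; apply: suffix_catM.
rewrite /clump_start occ_L /=; case: (leqP l (size m)) => [le_lm|lt_ml]; congr nat_of_bool.
  apply/hasPn => j; rewrite mem_iota /= => lt_jL; apply/negP => /andP [occ_j lt_Lj].
  rewrite occ_catM // in occ_j; last by rewrite size_hm; size_lia.
  by have := occ_end occ_j; move: size_hm; rewrite size_cat; size_lia.
apply/negbF/hasP; exists (size h - l)%N.
  by rewrite mem_iota /=; move: size_hm; rewrite size_cat; size_lia.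
rewrite occ_catM //; last by rewrite size_cat; size_lia.
by rewrite occ_suffix //=; move: size_hm; rewrite size_cat; size_lia.
Qed.

(* A word of R contains a single occurrence, at its end, hence one clump. *)
Lemma nstarts_R r : langR w r -> nstarts r = 1%N.
Proof.
case/andP=> suff_r /hasPn R_r; set L := (size r - l)%N.
have occ_rE i : occ r i = (i == L).
  apply/idP/eqP => [occ_i|->]; last exact: occ_suffix.
  have end_i := occ_end occ_i; have lt_i : (i < size r)%N by size_lia.
  by have := R_r i; rewrite mem_iota lt_i occ_i /= -leqNgt /L; size_lia.
rewrite (@nstarts_upto _ L.+1); last by have := size_suffix suff_r; rewrite /L; size_lia.
rewrite -addn1 iotaD count_cat /= addn0 (@eq_in_count _ _ pred0) ?count_pred0.
  rewrite !add0n /clump_start occ_rE eqxx /=; apply/eqP; rewrite eqb1.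
  by apply/hasPn => j; rewrite mem_iota occ_rE => /andP [_ /ltn_eqF ->].
by move=> i; rewrite mem_iota /clump_start occ_rE => /andP [_ /ltn_eqF ->].
Qed.

(* A text containing w factors as h v, h ending with w and v in U, by
   cutting after its last occurrence ... *)
Lemma cut_after_last_occ x : infix w x ->
  exists2 k, (k <= size x)%N & suffix w (take k x) && langU w (drop k x).
Proof.
rewrite infix_occ => /hasP [j0 _ occ_j0].
have ex_occ : exists i, occ x i by exists j0.
have bounded i : occ x i -> (i <= size x)%N by move/occ_end; size_lia.
case: (ex_maxnP ex_occ bounded) => j occ_j max_j.
exists (j + l)%N; first exact: occ_end.
rewrite occ_take_suffix //=; apply/hasPn => t _; apply/negP => /andP [].
by rewrite -occ_dropE // occ_drop => /max_j; size_lia.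
Qed.

(* ... and this is the only such factorization: in h v the last occurrence
   ends exactly at |h|. *)
Lemma cut_after_last_occ_unique h v h' v' :
  suffix w h -> langU w v -> suffix w h' -> langU w v' ->
  h ++ v = h' ++ v' -> size h = size h'.
Proof.
suff le_size h1 v1 h2 v2 : suffix w h1 -> langU w v1 -> suffix w h2 -> langU w v2 ->
    h1 ++ v1 = h2 ++ v2 -> (size h2 <= size h1)%N.
  move=> suff_h U_v suff_h' U_v' e; apply/eqP.
  by rewrite eqn_leq (le_size _ _ _ _ suff_h' U_v' suff_h U_v (esym e))
             (le_size _ _ _ _ suff_h U_v suff_h' U_v' e).
move=> suff1 U1 suff2 U2 e; have := occ_suffix suff2.
rewrite -(occ_catU suff2 U2) -e (occ_catU suff1 U1) => /occ_end.
by have := size_suffix suff2; size_lia.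
Qed.

Lemma suffix_drop_long x j : suffix w x -> (j + l <= size x)%N -> suffix w (drop j x).
Proof.
rewrite !suffixE size_drop drop_drop => suff_x le_jl.
by rewrite (_ : size x - j - l + j = size x - l)%N //; size_lia.
Qed.

(* Words ending with w and not in R are exactly the products h m with h
   ending with w and m in M: cut after the last but one occurrence.  The
   factorization is unique, since in h m the last but one occurrence ends
   exactly at |h|. *)
Lemma catM_notR h m :
  suffix w h -> langM w m -> suffix w (h ++ m) && ~~ langR w (h ++ m).
Proof.
move=> suff_h M_m; have m_nonempty : (0 < size m)%N by case/and3P: M_m.
rewrite suffix_catM //= negb_and negbK; apply/orP; right; apply/hasP.
exists (size h - l)%N; first by rewrite mem_iota size_cat; have := size_suffix suff_h; size_lia.
by rewrite occ_catl ?occ_suffix //= ?size_cat; have := size_suffix suff_h; size_lia.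
Qed.

Lemma cut_after_second_last_occ x : suffix w x -> ~~ langR w x ->
  exists2 k, (k <= size x)%N & suffix w (take k x) && langM w (drop k x).
Proof.
move=> suff_x; rewrite /langR suff_x negbK => /hasP [j0 _ early_j0].
have ex_early : exists i, occ x i && (i + l < size x)%N by exists j0.
have bounded i : occ x i && (i + l < size x)%N -> (i <= size x)%N.
  by case/andP=> _; size_lia.
case: (ex_maxnP ex_early bounded) => j /andP [occ_j lt_jl] max_j.
exists (j + l)%N; first exact: occ_end.
rewrite occ_take_suffix //=; apply/and3P; split.
- by rewrite size_drop; size_lia.
- by rewrite -occ_dropE // suffix_drop_long // occ_end.
- apply/hasPn => t _; apply/negP => /andP [/andP [occ_t pos_t]].
  rewrite -occ_dropE // occ_drop size_drop in occ_t *.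
  by move=> lt_tl; have := max_j (j + t)%N; rewrite occ_t /=; size_lia.
Qed.

Lemma cut_after_second_last_occ_unique h m h' m' :
  suffix w h -> langM w m -> suffix w h' -> langM w m' ->
  h ++ m = h' ++ m' -> size h = size h'.
Proof.
suff le_size h1 m1 h2 m2 : suffix w h1 -> langM w m1 -> suffix w h2 -> langM w m2 ->
    h1 ++ m1 = h2 ++ m2 -> (size h2 <= size h1)%N.
  move=> suff_h M_m suff_h' M_m' e; apply/eqP.
  by rewrite eqn_leq (le_size _ _ _ _ suff_h' M_m' suff_h M_m (esym e))
             (le_size _ _ _ _ suff_h M_m suff_h' M_m' e).
move=> suff1 M1 suff2 M2 e; have l_h2 := size_suffix suff2.
have m2_nonempty : (0 < size m2)%N by case/and3P: M2.
have := occ_suffix suff2.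
rewrite -(occ_catM suff2 M2) ?size_cat; last by size_lia.
rewrite -e (occ_catM suff1 M1) => [/occ_end|]; first by size_lia.
by rewrite e size_cat; size_lia.
Qed.

Lemma langCoE e :
  langCo w e = [&& (0 < size e)%N, (size e < l)%N & suffix w (w ++ e)].
Proof.
rewrite /langCo; case e_pos: (0 < size e)%N => //=; case lt_el: (size e < l)%N => //=.
apply/existsP/idP => [[k /existsP [e' /andP [_ /eqP ->]]]|/suffixP [e' e_eq]].
  exact: suffix_suffix.
have size_e' : size e' == size e by move/(congr1 size): e_eq; rewrite !size_cat; size_lia.
exists (Ordinal lt_el); apply/existsP; exists (Tuple size_e') => /=.
by rewrite e_pos e_eq eqxx.
Qed.

Lemma langCo_take m t : (0 < t)%N -> (t < size m)%N -> (t < l)%N ->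
  langCo w (take t m) = occ (w ++ m) t.
Proof.
move=> t_pos lt_tm lt_tl; have size_t : size (take t m) = t by rewrite size_take lt_tm.
rewrite langCoE size_t t_pos lt_tl /= suffixE size_cat size_t addKn /occ_at take_drop.
by rewrite take_cat ltnNge leq_addr /= addKn.
Qed.

Lemma langKE m : langK w m = langM w m && (size m < l)%N.
Proof.
rewrite /langK /langM langCoE; case lt_ml: (size m < l)%N; last by rewrite !andbF.
case m_pos: (0 < size m)%N => //; rewrite !andTb andbT; congr (_ && ~~ _).
apply/hasP/hasP => [[k] | [t]].
  rewrite mem_iota size_drop => /andP [_ lt_km] /andP [Co_k lt_k].
  have lt_kl : (k < size m)%N by size_lia.
  have k_pos : (0 < k)%N by move: Co_k; rewrite langCoE size_take lt_kl => /andP [].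
  exists k; first by rewrite mem_iota size_cat; size_lia.
  by rewrite -langCo_take // ?Co_k ?k_pos ?size_cat /=; size_lia.
rewrite mem_iota size_cat => /andP [_ lt_t] /andP [/andP [occ_t t_pos] lt_tl].
have lt_tm : (t < size m)%N by size_lia.
exists t; first by rewrite mem_iota; size_lia.
by rewrite langCo_take // ?size_drop; [rewrite occ_t /=; size_lia | size_lia].
Qed.

End Occurrences.

Local Open Scope ring_scope.

Section WordSums.
Variables (R : nmodType) (A : finType).

Definition tsum n (G : seq A -> R) : R := \sum_(x : n.-tuple A) G x.

Lemma eq_tsum n G G' : (forall x, size x = n -> G x = G' x) -> tsum n G = tsum n G'.
Proof. by move=> eqG; apply: eq_bigr => x _; rewrite eqG // size_tuple. Qed.

Lemma tsum0 G : tsum 0 G = G [::].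
Proof. by rewrite /tsum (big_pred1 [tuple]) //= => x; apply/esym/eqP/tuple0. Qed.

Lemma tsum_cons n G : tsum n.+1 G = \sum_(a : A) tsum n (fun x => G (a :: x)).
Proof.
rewrite /tsum pair_big /= (reindex (fun ax : A * n.-tuple A => [tuple of ax.1 :: ax.2])) //=.
exists (fun t : n.+1.-tuple A => (thead t, [tuple of behead t])).
  by case=> a x _ /=; rewrite theadE; congr (_, _); apply: val_inj.
by move=> t _; rewrite [RHS]tuple_eta.
Qed.

Lemma tsum_cat k m G : tsum (k + m) G = tsum k (fun h => tsum m (fun v => G (h ++ v))).
Proof.
elim: k G => [|k IH] G; first by rewrite add0n tsum0.
by rewrite addSn !tsum_cons; apply: eq_bigr => a _; rewrite IH.
Qed.

Lemma tsumD n G1 G2 : tsum n (fun x => G1 x + G2 x) = tsum n G1 + tsum n G2.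
Proof. exact: big_split. Qed.

Lemma tsum_sum J n (G : 'I_J -> seq A -> R) :
  \sum_(j < J) tsum n (G j) = tsum n (fun x => \sum_(j < J) G j x).
Proof. exact: exchange_big. Qed.

Lemma tsum_eq0 n G : (forall x, size x = n -> G x = 0) -> tsum n G = 0.
Proof. by move=> G0; apply: big1 => x _; rewrite G0 // size_tuple. Qed.

Lemma tsum_factor n (Q : pred (seq A)) (Q2 : seq A -> seq A -> bool) (F : seq A -> R) :
  (forall h v, Q2 h v -> Q (h ++ v)) ->
  (forall x, Q x -> exists2 k, (k <= size x)%N & Q2 (take k x) (drop k x)) ->
  (forall h v h' v', Q2 h v -> Q2 h' v' -> h ++ v = h' ++ v' -> size h = size h') ->
  tsum n (fun x => if Q x then F x else 0) =
  \sum_(k < n.+1) tsum k (fun h => tsum (n - k) (fun v => if Q2 h v then F (h ++ v) else 0)).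
Proof.
move=> Q_cat Q_cut cut_unique.
have one_cut x : size x = n -> (if Q x then F x else 0) =
    \sum_(k < n.+1) if Q2 (take k x) (drop k x) then F x else 0.
  move=> size_x; case Q_x: (Q x); last first.
    rewrite big1 // => k _; case Q2_k: (Q2 _ _) => //.
    by move: (Q_cat _ _ Q2_k); rewrite cat_take_drop Q_x.
  have [k0 le_k0 Q2_k0] := Q_cut _ Q_x; have lt_k0 : (k0 < n.+1)%N by rewrite ltnS -size_x.
  rewrite (bigD1 (Ordinal lt_k0)) //= Q2_k0 big1 ?addr0 // => k /negbTE k_neq.
  case Q2_k: (Q2 _ _) => //; have := cut_unique _ _ _ _ Q2_k0 Q2_k.
  have le_k : (k <= size x)%N by rewrite size_x -ltnS.
  rewrite !cat_take_drop !size_takel // => /(_ erefl) eq_k0k.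
  by move: k_neq; rewrite -val_eqE /= eq_k0k eqxx.
rewrite (eq_tsum one_cut) {1}/tsum exchange_big /=; apply: eq_bigr => [[k lt_kn]] _ /=.
have le_kn : (k <= n)%N by rewrite -ltnS.
transitivity (tsum (k + (n - k)) (fun x => if Q2 (take k x) (drop k x) then F x else 0)).
  by rewrite subnKC.
rewrite tsum_cat.
apply: eq_tsum => h size_h; apply: eq_tsum => v _.
by rewrite -size_h take_size_cat // drop_size_cat.
Qed.

End WordSums.

Section SeriesAlgebra.
Variable R : numFieldType.
Local Notation fps := (fps2 R).

(* On a finite box of coefficients [0, I] x [0, N], a bivariate series is
   modelled by a polynomial in {poly {poly R}} (outer variable u, inner z);
   the ring laws of fps2 are then inherited from those of polynomials. *)
Definition models (I N : nat) (f : fps) (P : {poly {poly R}}) : Prop :=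
  forall i n, (i <= I)%N -> (n <= N)%N -> f i n = P`_i`_n.

Definition trunc (I N : nat) (f : fps) : {poly {poly R}} :=
  \poly_(i < I.+1) \poly_(n < N.+1) f i n.

Lemma models_trunc I N f : models I N f (trunc I N f).
Proof. by move=> i n le_iI le_nN; rewrite coef_poly ltnS le_iI coef_poly ltnS le_nN. Qed.

Lemma models_add I N f g P Q :
  models I N f P -> models I N g Q -> models I N (fps2_add f g) (P + Q).
Proof. by move=> fP gQ i n le_i le_n; rewrite /fps2_add fP // gQ // !coefD. Qed.

Lemma models_opp I N f P : models I N f P -> models I N (fps2_opp f) (- P).
Proof. by move=> fP i n le_i le_n; rewrite /fps2_opp fP // !coefN. Qed.

Lemma models_mul I N f g P Q :
  models I N f P -> models I N g Q -> models I N (fps2_mul f g) (P * Q).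
Proof.
move=> fP gQ i n le_i le_n; rewrite coefM coef_sum; apply: eq_bigr => j _.
rewrite coefM; apply: eq_bigr => k _.
have le_j : (j <= I)%N by apply: leq_trans le_i; rewrite -ltnS.
have le_k : (k <= N)%N by apply: leq_trans le_n; rewrite -ltnS.
by rewrite fP // gQ // (leq_trans (leq_subr _ _)).
Qed.

Lemma models_one I N : models I N (fps2_const 1) 1.
Proof.
move=> i n _ _; rewrite /fps2_const coef1.
by case: i => [|i] /=; rewrite ?coef1 ?coef0 //; case: n.
Qed.

Lemma models_u I N : models I N (fps2_u R) 'X.
Proof.
move=> i n _ _; rewrite /fps2_u coefX.
by case: i => [|[|i]] /=; rewrite ?coef1 ?coef0 //; case: n.
Qed.

Lemma models_z I N (g : nat -> R) : models I N (fps2_z g) (\poly_(n < N.+1) g n)%:P.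
Proof.
move=> i n _ le_n; rewrite /fps2_z coefC.
by case: i => [|i] /=; rewrite ?coef0 // coef_poly ltnS le_n.
Qed.

Lemma fps2_eq_models (f g : fps) :
  (forall I N, exists2 P, models I N f P & models I N g P) -> f = g.
Proof.
move=> common; apply: functional_extensionality => i; apply: functional_extensionality => n.
by have [P fP gP] := common i n; rewrite fP // gP.
Qed.

Lemma fps2_mulC (f g : fps) : fps2_mul f g = fps2_mul g f.
Proof.
apply: fps2_eq_models => I N; exists (trunc I N f * trunc I N g).
  by apply: models_mul; apply: models_trunc.
by rewrite mulrC; apply: models_mul; apply: models_trunc.
Qed.

Lemma fps2_mulA (f g h : fps) : fps2_mul f (fps2_mul g h) = fps2_mul (fps2_mul f g) h.
Proof.
apply: fps2_eq_models => I N; exists (trunc I N f * (trunc I N g * trunc I N h)).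
  by do 2?apply: models_mul; apply: models_trunc.
by rewrite mulrA; do 2?apply: models_mul; apply: models_trunc.
Qed.

Lemma fps2_mulDl (f g h : fps) :
  fps2_mul (fps2_add f g) h = fps2_add (fps2_mul f h) (fps2_mul g h).
Proof.
apply: fps2_eq_models => I N; exists ((trunc I N f + trunc I N g) * trunc I N h).
  by apply: models_mul; first apply: models_add; apply: models_trunc.
by rewrite mulrDl; apply: models_add; apply: models_mul; apply: models_trunc.
Qed.

Lemma fps2_mulNl (f g : fps) : fps2_mul (fps2_opp f) g = fps2_opp (fps2_mul f g).
Proof.
apply: fps2_eq_models => I N; exists (- trunc I N f * trunc I N g).
  by apply: models_mul; first apply: models_opp; apply: models_trunc.
by rewrite mulNr; apply: models_opp; apply: models_mul; apply: models_trunc.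
Qed.

Lemma fps2_mul1l (f : fps) : fps2_mul (fps2_const 1) f = f.
Proof.
apply: fps2_eq_models => I N; exists (1 * trunc I N f).
  by apply: models_mul; [apply: models_one | apply: models_trunc].
by rewrite mul1r; apply: models_trunc.
Qed.

Lemma fps2_mul_u (f : fps) i n :
  fps2_mul (fps2_u R) f i n = if i is i'.+1 then f i' n else 0.
Proof.
rewrite (models_mul (@models_u i n) (@models_trunc i n f)) // coefXM.
by case: i => [|i] /=; rewrite ?coef0 // -(@models_trunc i.+1 n f) // leqW.
Qed.

Lemma fps2_mul_z (f : fps) (g : nat -> R) i n :
  fps2_mul f (fps2_z g) i n = \sum_(k < n.+1) f i k * g (n - k)%N.
Proof.
rewrite (models_mul (@models_trunc i n f) (@models_z i n g)) // coefMC coefM.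
apply: eq_bigr => k _; rewrite coef_poly ltnS leq_subr -(@models_trunc i n f) //.
by rewrite -ltnS.
Qed.

End SeriesAlgebra.

Lemma sum_ord_vanishing (V : nmodType) (F : nat -> V) n T :
  (n < T)%N -> (forall k, (n < k)%N -> F k = 0) ->
  \sum_(k < T) F k = \sum_(k < n.+1) F k.
Proof.
move=> lt_nT F_vanish; rewrite (big_ord_widen _ F lt_nT) [RHS]big_mkcond /=.
by apply: eq_bigr => k _; case: ltnP => // lt_nk; rewrite F_vanish.
Qed.

Section GeometricInverse.
Variables (R : numFieldType) (D : fps2 R).
Local Notation fps := (fps2 R).

(* fps2_inv D is the geometric series of E = 1 - D; it is the inverse of D
   as soon as E has no pure power of u, i.e. no term in z^0. *)
Let E : fps := fps2_add (fps2_const 1) (fps2_opp D).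
Hypothesis E_no_z0 : forall i, E i 0 = 0.

Lemma pow_E_low k i n : (n < k)%N -> fps2_pow E k i n = 0.
Proof.
elim: k i n => // k IH i n lt_nk; rewrite /fps2_pow iterS -/(fps2_pow E k).
apply: big1 => j _; apply: big1 => [[[|t] lt_tn]] _ /=.
  by rewrite E_no_z0 mul0r.
by rewrite IH ?mulr0 //; lia.
Qed.

Lemma fps2_inv_sum i n T : (n < T)%N -> fps2_inv D i n = \sum_(k < T) fps2_pow E k i n.
Proof.
have E_vanish k : (n < k)%N -> fps2_pow E k i n = 0 by exact: pow_E_low.
move=> lt_nT; rewrite /fps2_inv [RHS](sum_ord_vanishing lt_nT E_vanish).
by rewrite [LHS](sum_ord_vanishing _ E_vanish) //; lia.
Qed.

Lemma fps2_inv_fix : fps2_inv D = fps2_add (fps2_const 1) (fps2_mul E (fps2_inv D)).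
Proof.
apply: functional_extensionality => i; apply: functional_extensionality => n.
rewrite /fps2_add (@fps2_inv_sum i n n.+2) // big_ord_recl; congr (_ + _).
rewrite [RHS]/fps2_mul exchange_big /=; apply: eq_bigr => j _.
rewrite exchange_big; apply: eq_bigr => t _.
by rewrite (@fps2_inv_sum _ _ n.+1) ?mulr_sumr // ltnS leq_subr.
Qed.

(* The equation X = B + X E has at most one solution, by induction on the
   z-degree: the coefficient at z^n of X E only involves X below z^n. *)
Lemma fix_unique (B X Y : fps) :
  X = fps2_add B (fps2_mul X E) -> Y = fps2_add B (fps2_mul Y E) -> X = Y.
Proof.
move=> X_fix Y_fix; apply: functional_extensionality => i.
apply: functional_extensionality => n; elim/ltn_ind: n i => n IH i.
rewrite X_fix Y_fix /fps2_add /fps2_mul; congr (_ + _).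
apply: eq_bigr => j _; apply: eq_bigr => [[t lt_tn]] _ /=.
case: (ltnP t n) => [lt_tn'|le_nt]; first by rewrite IH.
by rewrite (_ : n - t = 0)%N ?E_no_z0 ?mulr0 //; lia.
Qed.

Lemma fix_solution (B X : fps) :
  X = fps2_add B (fps2_mul X E) -> X = fps2_mul B (fps2_inv D).
Proof.
move=> X_fix; apply: (fix_unique X_fix).
rewrite {1}fps2_inv_fix fps2_mulC fps2_mulDl fps2_mul1l; congr fps2_add.
by rewrite -fps2_mulA fps2_mulC [fps2_mul (fps2_inv D) B]fps2_mulC.
Qed.

End GeometricInverse.

Section CountingClumps.
Variables (R : numFieldType) (A : finType) (p : A -> R) (w : seq A).
Hypothesis w_nonempty : (0 < size w)%N.
Local Notation l := (size w).
Local Notation P := (Pw p).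
Local Notation u := (fps2_u R).
Local Notation one := (fps2_const (1 : R)).
Local Notation zseries L := (fps2_z (gfc p L)).

Lemma Pw_cat h v : P (h ++ v) = P h * P v.
Proof. exact: big_cat. Qed.

Lemma gfcE (L : pred (seq A)) n : gfc p L n = tsum n (fun x => if L x then P x else 0).
Proof. exact: big_mkcond. Qed.

Lemma tsum_mul k m (G1 G2 : seq A -> R) :
  tsum k G1 * tsum m G2 = tsum k (fun h => tsum m (fun v => G1 h * G2 v)).
Proof. by rewrite /tsum mulr_suml; apply: eq_bigr => h _; rewrite mulr_sumr. Qed.

Lemma mul_if (b1 b2 : bool) (x y : R) :
  (if b1 then x else 0) * (if b2 then y else 0) = if b1 && b2 then x * y else 0.
Proof. by case: b1; case: b2; rewrite ?mul0r ?mulr0. Qed.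

Lemma sum_ord_pick (i c : nat) (X : nat -> R) :
  \sum_(j < i.+1) (if j == c :> nat then X j else 0) = if (c <= i)%N then X c else 0.
Proof.
case: leqP => [le_ci|lt_ic]; last first.
  apply: big1 => j _; case: eqP => // eq_jc.
  by move: (ltn_ord j); rewrite eq_jc ltnS leqNgt lt_ic.
have lt_ci : (c < i.+1)%N by rewrite ltnS.
rewrite (bigD1 (Ordinal lt_ci)) //= eqxx big1 ?addr0 // => j.
by rewrite -val_eqE /= => /negbTE ->.
Qed.

(* The denominator D = 1 - u M + (u - 1) K of the theorem, and 1 - D, whose
   coefficient of u^i z^n weighs the words m of M of length n with
   i = [|m| >= |w|]: appending m to a text ending with w adds i clumps. *)
Definition denom : fps2 R :=
  fps2_add (fps2_add one (fps2_opp (fps2_mul u (zseries (langM w)))))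
           (fps2_mul (fps2_add u (fps2_opp one)) (zseries (langK w))).

Definition compl_denom : fps2 R := fps2_add one (fps2_opp denom).

Lemma compl_denom_coef i n : compl_denom i n =
  tsum n (fun m => if langM w m && (i == (l <= size m)%N :> nat) then P m else 0).
Proof.
rewrite /compl_denom /denom fps2_mulDl fps2_mulNl fps2_mul1l /fps2_add /fps2_opp.
rewrite !fps2_mul_u /fps2_z !gfcE; set c := fps2_const 1 i n.
case: i c => [|[|i]] c /=.
- rewrite subr0 sub0r opprD opprK addrA subrr add0r.
  by apply: eq_tsum => m _; rewrite (langKE w_nonempty) eq_sym eqb0 -ltnNge.
- rewrite subr0 opprD opprB addrA [c + _]addrC subrK /tsum -sumrN -big_split.
  apply: eq_bigr => m _.
  rewrite (langKE w_nonempty) eq_sym eqb1.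
  by case: (langM w m); case: (ltnP (size m) l) => //=; rewrite ?subrr ?subr0.
- rewrite !subr0 addr0 subrr tsum_eq0 // => m _.
  by case: (langM w m); case: (l <= size m)%N.
Qed.

Lemma compl_denom_no_z0 i : compl_denom i 0 = 0.
Proof. by rewrite compl_denom_coef tsum0. Qed.

Definition endw : fps2 R :=
  fun i n => tsum n (fun x => if suffix w x && (nstarts w x == i) then P x else 0).

Lemma endw_notR_factor i n :
  tsum n (fun x => if suffix w x && ~~ langR w x
                   then (if nstarts w x == i then P x else 0) else 0) =
  \sum_(k < n.+1) tsum k (fun h => tsum (n - k) (fun m =>
     if suffix w h && langM w m && (nstarts w h + (l <= size m) == i)%N then P h * P m else 0)).
Proof.
rewrite (@tsum_factor _ _ n _ (fun h m => suffix w h && langM w m)).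
- apply: eq_bigr => k _; apply: eq_tsum => h _; apply: eq_tsum => m _.
  case: (boolP (suffix w h && langM w m)) => [/andP [suff_h M_m]|_] //=.
  by rewrite (nstarts_catM w_nonempty) // Pw_cat.
- by move=> h m /andP [suff_h M_m]; apply: catM_notR.
- by move=> x /andP [suff_x notR_x]; apply: cut_after_second_last_occ.
- move=> h m h' m' /andP [suff_h M_m] /andP [suff_h' M_m'].
  exact: (cut_after_second_last_occ_unique w_nonempty suff_h M_m suff_h' M_m').
Qed.

Lemma endw_mul_compl i n :
  fps2_mul endw compl_denom i n =
  \sum_(k < n.+1) tsum k (fun h => tsum (n - k) (fun m =>
     if suffix w h && langM w m && (nstarts w h + (l <= size m) == i)%N then P h * P m else 0)).
Proof.
rewrite /fps2_mul exchange_big /=; apply: eq_bigr => k _.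
under eq_bigr => j _ do rewrite /endw compl_denom_coef tsum_mul.
rewrite tsum_sum; apply: eq_tsum => h _; rewrite tsum_sum; apply: eq_tsum => m _.
set b := (l <= size m)%N; set c := nstarts w h.
transitivity (\sum_(j < i.+1) if j == c :> nat then
    (if suffix w h && langM w m && (i - j == b)%N then P h * P m else 0) else 0).
  apply: eq_bigr => j _; rewrite mul_if [j == c :> nat]eq_sym.
  by case: (c == j); case: (suffix w h); rewrite /= ?andbF.
rewrite (sum_ord_pick i c (fun j =>
  if suffix w h && langM w m && (i - j == b)%N then P h * P m else 0)).
case: (leqP c i) => [le_ci|lt_ic].
  by rewrite -[(i - c == b)%N](eqn_add2l c) subnKC // [(c + b == i)%N]eq_sym.
by rewrite gtn_eqF ?andbF // ltn_addr.
Qed.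

(* A text ending with w is either in R (one clump) or a product h m as
   above: endw = u R + endw (1 - D). *)
Lemma endw_fix :
  endw = fps2_add (fps2_mul u (zseries (langR w))) (fps2_mul endw compl_denom).
Proof.
apply: functional_extensionality => i; apply: functional_extensionality => n.
have uR_coef : fps2_mul u (zseries (langR w)) i n =
    tsum n (fun x => if langR w x && (i == 1)%N then P x else 0).
  rewrite fps2_mul_u /fps2_z gfcE; case: (eqVneq i 1%N) => [->|ne_i1].
    by apply: eq_tsum => x _; rewrite andbT.
  rewrite [RHS]tsum_eq0 => [|x _]; last by rewrite andbF.
  by case: i ne_i1 => [|[|i]].
rewrite /fps2_add uR_coef endw_mul_compl -endw_notR_factor -tsumD.
apply: eq_tsum => x _; case R_x: (langR w x) => /=.
  by rewrite (nstarts_R w_nonempty R_x) (andP R_x).1 addr0 eq_sym.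
by rewrite add0r andbT; case: (suffix w x).
Qed.

(* A text either avoids w, or is a product h v with h ending with w and v in
   U, and then it has as many clumps as h: O = N + endw U. *)
Lemma clumps_decomp : (fun i n => clump_prob p w n i)
  = fps2_add (zseries (langN w)) (fps2_mul endw (zseries (langU w))).
Proof.
apply: functional_extensionality => i; apply: functional_extensionality => n.
have -> : clump_prob p w n i =
    tsum n (fun x => if langN w x && (i == 0)%N then P x else 0) +
    tsum n (fun x => if infix w x then (if nstarts w x == i then P x else 0) else 0).
  rewrite -tsumD /clump_prob big_mkcond; apply: eq_bigr => x _ /=.
  rewrite nclumps_starts /langN.
  case: (boolP (infix w (tval x))) => [infix_x|]; first by rewrite add0r.
  by rewrite -(nstarts_eq0 w_nonempty) => /eqP ->; rewrite addr0 eq_sym.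
rewrite /fps2_add; congr (_ + _).
  rewrite /fps2_z gfcE; case: (i == 0)%N; first by apply: eq_tsum => x _; rewrite andbT.
  by rewrite tsum_eq0 // => x _; rewrite andbF.
rewrite fps2_mul_z (@tsum_factor _ _ n _ (fun h v => suffix w h && langU w v)).
- apply: eq_bigr => k _; rewrite /endw gfcE tsum_mul; apply: eq_tsum => h _.
  apply: eq_tsum => v _; rewrite mul_if -andbA [(_ == i) && _]andbC andbA.
  case: (boolP (suffix w h && langU w v)) => //= /andP [suff_h U_v].
  by rewrite (nstarts_catU w_nonempty) // Pw_cat.
- by move=> h v /andP [/suffixW infix_h _]; apply: infix_catr.
- by move=> x /(cut_after_last_occ w_nonempty).
- move=> h v h' v' /andP [suff_h U_v] /andP [suff_h' U_v'].
  exact: (cut_after_last_occ_unique w_nonempty suff_h U_v suff_h' U_v').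
Qed.

End CountingClumps.

Theorem mainTheorem5 (R : realFieldType) (A : finType) (p : A -> R) (w : seq A)
  (hA : (1 < #|A|)%N) (hp : forall a, 0 < p a) (hsum : \sum_(a : A) p a = 1)
  (hw : (2 <= size w)%N) :
  let Nz := fps2_z (gfc p (langN w)) in
  let Rz := fps2_z (gfc p (langR w)) in
  let Uz := fps2_z (gfc p (langU w)) in
  let Mz := fps2_z (gfc p (langM w)) in
  let Kz := fps2_z (gfc p (langK w)) in
  let u := fps2_u R in
  let one := fps2_const 1 in
  (fun i n => clump_prob p w n i)
  = fps2_add Nz
      (fps2_mul (fps2_mul (fps2_mul u Rz) Uz)
         (fps2_inv (fps2_add (fps2_add one (fps2_opp (fps2_mul u Mz)))
                             (fps2_mul (fps2_add u (fps2_opp one)) Kz)))).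
Proof.
move=> Nz Rz Uz Mz Kz u one.
have w_nonempty : (0 < size w)%N by apply: ltnW.
rewrite (clumps_decomp p w_nonempty); congr fps2_add.
rewrite (fix_solution (compl_denom_no_z0 p w_nonempty) (endw_fix p w_nonempty)).
by rewrite -fps2_mulA [fps2_mul (fps2_inv _) _]fps2_mulC fps2_mulA.
Qed.
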